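(* Let $\ell$ and $n$ be positive integers. For each positive integer $\ell'$, let $O_{n,\ell'}(\mathbb{Q})$ denote the set of $n\times n$ rational orthogonal matrices of level $\ell'$. Then $$\sum_{\ell'\mid \ell}\big|O_{n,\ell'}(\mathbb{Q})\big|\le (2n)^{\ell^2 n}.$$
   Context: A rational orthogonal matrix is an $n\times n$ matrix $Q$ with rational entries and $Q^\top Q=I$. The level of a rational matrix $M$ is the smallest positive integer $\ell$ such that $\ell M$ has integer entries. The sum ranges over all positive divisors $\ell'$ of $\ell$. *)

From HB Require Import structures.
From mathcomp Require Import all_boot all_order all_algebra.
From mathcomp Require Import boolp classical_sets cardinality.
Set Implicit Arguments. Unset Strict Implicit. Unset Printing Implicit Defensive.
Import Order.TTheory GRing.Theory Num.Theory.
Local Open Scope ring_scope.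

Definition int_mx (n : nat) (M : 'M[rat]_n) : Prop :=
  forall i j, M i j \is a Num.int.

Definition is_level (n : nat) (M : 'M[rat]_n) (ell : nat) : Prop :=
  (0 < ell)%N /\ int_mx (ell%:R *: M) /\
  (forall k : nat, (0 < k)%N -> int_mx (k%:R *: M) -> (ell <= k)%N).

Definition rat_orthogonal (n : nat) (Q : 'M[rat]_n) : Prop :=
  Q^T *m Q = 1%:M.

Definition O_level (n ell : nat) : set 'M[rat]_n :=
  [set Q | rat_orthogonal Q /\ is_level Q ell].
Arguments O_level : clear implicits.

(* If the level of Q divides ell, each column x of ell Q is an integer vector
   with x_1^2 + ... + x_n^2 = ell^2. Such a column is determined by the word of
   length ell^2 over {1..n} x {+,-} in which each letter (i, sign x_i) occurs
   x_i^2 times, so there are at most (2n)^(ell^2 n) such matrices Q. Since the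
   level of a matrix is unique, the sets O_{n,d} for d dividing ell are
   disjoint subsets of them. *)

From mathcomp Require Import all_boot all_order all_algebra.
From mathcomp Require Import finmap classical_sets cardinality.

Set Implicit Arguments.
Unset Strict Implicit.
Unset Printing Implicit Defensive.
Import Order.TTheory GRing.Theory Num.Theory.

Local Open Scope ring_scope.

Section SquareCode.
Variable I : finType.
Implicit Types (u v : I -> int).

Definition sq_code v : seq (I * bool) :=
  flatten [seq nseq (`|v i| ^ 2)%N (i, 0 <= v i) | i <- enum I].

Lemma size_sq_code v : size (sq_code v) = (\sum_i `|v i| ^ 2)%N.
Proof.
rewrite size_flatten /shape -map_comp sumnE big_map big_enum /=.
by apply: eq_bigr => i _; rewrite /= size_nseq.
Qed.

Lemma count_sq_code v i b :
  count_mem (i, b) (sq_code v) = (((0 <= v i)%R == b) * `|v i| ^ 2)%N.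
Proof.
rewrite count_flatten -map_comp sumnE big_map big_enum /= (bigD1 i) //=.
rewrite count_nseq /= xpair_eqE eqxx eq_sym big1 ?addn0 // => k /negbTE ki.
by rewrite count_nseq /= xpair_eqE ki.
Qed.

Lemma sqr_absz_sq_code v i : (`|v i| ^ 2 =
  count_mem (i, true) (sq_code v) + count_mem (i, false) (sq_code v))%N.
Proof. by rewrite !count_sq_code; case: (0 <= v i); rewrite ?mul1n ?mul0n ?addn0. Qed.

Lemma sign_sq_code v i :
  v i = (-1) ^+ (count_mem (i, true) (sq_code v) == 0)%N * (`|v i|%N)%:Z.
Proof.
rewrite count_sq_code; have [v_neg|v_pos|->] := ltrgtP (v i) 0.
- by rewrite mul0n expr1 ltz0_abs // mulN1r opprK.
- by rewrite mul1n expn_eq0 absz_eq0 gt_eqF // gtz0_abs // mul1r.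
- by rewrite mulr0.
Qed.

Lemma sq_code_inj u v : sq_code u = sq_code v -> u =1 v.
Proof.
move=> uv i; have abs_uv : `|u i|%N = `|v i|%N.
  by apply/eqP; rewrite -eqn_sqr !sqr_absz_sq_code uv.
by rewrite [u i]sign_sq_code [v i]sign_sq_code uv abs_uv.
Qed.

End SquareCode.

Lemma cardfs_bigfcup_disjoint (T : choiceType) (I : eqType) (r : seq I)
    (F : I -> {fset T}) :
  uniq r -> {in r &, forall i j, i != j -> [disjoint F i & F j]%fset} ->
  #|` \bigcup_(i <- r) F i|%fset = (\sum_(i <- r) #|` F i|)%N.
Proof.
elim: r => [|x r IHr] /=; first by rewrite !big_nil cardfs0.
move=> /andP[x_r uniq_r] disjF.
have disjF_r : {in r &, forall i j, i != j -> [disjoint F i & F j]%fset}.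
  by move=> i j ir jr; apply: disjF; rewrite inE ?ir ?jr orbT.
have disj_x : [disjoint F x & \bigcup_(i <- r) F i]%fset.
  rewrite big_seq; elim/big_rec: _ => [|i U ir disjU]; first exact: fdisjointX0.
  rewrite fdisjointXU disjU andbT disjF ?inE ?eqxx ?ir ?orbT //.
  by apply: contraNneq x_r => ->.
rewrite !big_cons -IHr //; apply/eqP; rewrite (leq_card_fsetU _ _).2 //.
Qed.

Lemma cardfs_le_card_inj (T : choiceType) (U : finType) (f : T -> U)
    (X : {fset T}) :
  {in X &, injective f} -> (#|` X| <= #|U|)%N.
Proof.
move=> /card_in_imfsetP/eqP <-; rewrite -(card_finset predT).
by apply: fsubset_leq_card; apply/fsubsetP => y _; rewrite in_fset inE.
Qed.

Lemma finite_set_inj (T : Type) (U : finType) (f : T -> U) (A : set T) :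
  {in A &, injective f} -> finite_set A.
Proof. by move=> /inj_card_eq/eq_finite_set <-; exact: finite_finset. Qed.

Lemma sum_sqr_col_orthogonal (R : pzRingType) (n : nat) (Q : 'M[R]_n) j :
  Q^T *m Q = 1%:M -> \sum_i Q i j ^+ 2 = 1.
Proof.
move=> /matrixP/(_ j j); rewrite !mxE eqxx mulr1n => <-.
by apply: eq_bigr => i _; rewrite !mxE.
Qed.

Lemma natr_absz_sqr (R : numDomainType) (z : int) :
  (`|z| ^ 2)%N%:R = z%:~R ^+ 2 :> R.
Proof. by rewrite natrX natr_absz intr_norm real_normK ?realz. Qed.

Section ColumnCode.
Variables (n : nat) (i0 : 'I_n).

Definition int_mx_col_sqnorm (k : nat) : set 'M[rat]_n :=
  [set M | int_mx M /\ forall j, \sum_i M i j ^+ 2 = k%:R].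

Definition col_code (k : nat) (M : 'M[rat]_n) : {ffun 'I_n -> k.-tuple ('I_n * bool)} :=
  [ffun j => insubd (nseq_tuple k (i0, true)) (sq_code (fun i => Num.floor (M i j)))].

Lemma size_sq_code_col k M j : int_mx_col_sqnorm k M ->
  size (sq_code (fun i => Num.floor (M i j))) = k.
Proof.
move=> [intM normM]; rewrite size_sq_code; apply/eqP.
rewrite -(eqr_nat rat) natr_sum -(normM j); apply/eqP/eq_bigr => i _.
by rewrite natr_absz_sqr floorK.
Qed.

Lemma col_code_inj k : {in int_mx_col_sqnorm k &, injective (col_code k)}.
Proof.
move=> M N /set_mem normM /set_mem normN /ffunP codeMN; apply/matrixP => i j.
have := congr1 val (codeMN j); rewrite !ffunE !val_insubd.
rewrite (size_sq_code_col j normM) (size_sq_code_col j normN) eqxx.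
move=> /sq_code_inj/(_ i)/(congr1 (intr : int -> rat)).
by case: normM normN => [intM _] [intN _]; rewrite !floorK ?intM ?intN.
Qed.

Lemma card_col_code k :
  #|{: {ffun 'I_n -> k.-tuple ('I_n * bool)}}| = ((2 * n) ^ (k * n))%N.
Proof.
by rewrite card_ffun card_tuple card_prod card_bool card_ord -expnM mulnC.
Qed.

End ColumnCode.

Lemma is_level_uniq (n : nat) (M : 'M[rat]_n) d1 d2 :
  is_level M d1 -> is_level M d2 -> d1 = d2.
Proof.
move=> [d1_gt0 [intM1 min1]] [d2_gt0 [intM2 min2]].
by apply/eqP; rewrite eqn_leq min1 ?min2.
Qed.

Lemma O_level_disjoint (n d1 d2 : nat) :
  d1 != d2 -> (O_level n d1 `&` O_level n d2 = set0)%classic.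
Proof.
move=> d12; apply/seteqP; split=> // Q [[_ lvl1] [_ lvl2]].
by move: d12; rewrite (is_level_uniq lvl1 lvl2) eqxx.
Qed.

Definition O_denom (n ell : nat) : set 'M[rat]_n :=
  [set Q | rat_orthogonal Q /\ int_mx (ell%:R *: Q)].
Arguments O_denom : clear implicits.

Lemma O_level_sub_denom (n d ell : nat) :
  (d %| ell)%N -> (O_level n d `<=` O_denom n ell)%classic.
Proof.
move=> /dvdnP[k ->] Q [orthoQ [_ [intQ _]]]; split=> // i j.
by rewrite natrM -scalerA mxE rpredM ?rpred_nat ?intQ.
Qed.

Lemma O_denom_col_sqnorm (n ell : nat) (Q : 'M[rat]_n) :
  O_denom n ell Q -> int_mx_col_sqnorm (ell ^ 2) (ell%:R *: Q).
Proof.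
move=> [orthoQ intQ]; split=> // j.
under eq_bigr do rewrite mxE exprMn.
by rewrite -mulr_sumr sum_sqr_col_orthogonal // mulr1 natrX.
Qed.

Lemma O_denom_code_inj (n : nat) (i0 : 'I_n) (ell : nat) : (0 < ell)%N ->
  {in O_denom n ell &, injective (fun Q => col_code i0 (ell ^ 2) (ell%:R *: Q))}.
Proof.
move=> ell_gt0 Q Q' /set_mem denomQ /set_mem denomQ' /col_code_inj.
move=> /(_ (mem_set (O_denom_col_sqnorm denomQ)) (mem_set (O_denom_col_sqnorm denomQ'))).
by apply: scalerI; rewrite pnatr_eq0 -lt0n.
Qed.

Local Close Scope ring_scope.
Local Open Scope classical_set_scope.
Local Open Scope fset_scope.

Theorem mainTheorem3 (ell n : nat) (hell : (0 < ell)%N) (hn : (0 < n)%N) :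
  (forall d : nat, d %| ell -> finite_set (O_level n d)) /\
  (\sum_(d <- divisors ell) #|` fset_set (O_level n d)| <= (2 * n) ^ (ell ^ 2 * n))%N.
Proof.
have code_inj := O_denom_code_inj (i0 := Ordinal hn) hell.
have finO d : d %| ell -> finite_set (O_level n d).
  by move=> d_ell; apply: sub_finite_set (O_level_sub_denom d_ell) (finite_set_inj code_inj).
split=> //.
rewrite -cardfs_bigfcup_disjoint ?divisors_uniq //; last first.
  move=> d1 d2; rewrite -!dvdn_divisors // => /finO fin1 /finO fin2 d12.
  by rewrite -fsetI_eq0 -fset_setI // O_level_disjoint // fset_set0.
rewrite -(@card_col_code n (ell ^ 2)); apply: cardfs_le_card_inj (sub_in2 _ code_inj).
move=> Q /bigfcupP[d /andP[]]; rewrite -dvdn_divisors // => d_ell _.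
rewrite in_fset_set; last exact: finO.
by move=> /set_mem/(O_level_sub_denom d_ell)/mem_set.
Qed.
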